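(* Let $V\subset\mathbb{Z}^2$ be site-connected. Then each vertex of the graph $B(V)$ has degree two. Consequently $B(V)$ is a vertex-disjoint union of vertex self-avoiding circuits and vertex self-avoiding doubly-infinite paths. If moreover $V$ is infinite, then $B(V)$ contains no vertex self-avoiding circuits.
   Context: Vertices $x,y\in\mathbb{Z}^2$ are site-neighbors if $\|x-y\|_1=1$. A set $W\subset\mathbb{Z}^2$ is site-connected if any two of its points are joined by a path of successive site-neighbors staying in $W$; a site-component of $W$ is a maximal site-connected subset. The closure $\overline{V}$ of $V\subset\mathbb{Z}^2$ is the union of $V$ with all finite site-components of $\mathbb{Z}^2\setminus V$. The dual lattice has vertex set $\mathbb{Z}^2+(\tfrac12,\tfrac12)$ and edges between points at Euclidean distance 1; each dual edge bisects a unique edge $\{x,y\}$ of $\mathbb{Z}^2$. The dual edge boundary $B(V)$ is the subgraph of the dual lattice induced by the set of dual edges whose bisecting edge $\{x,y\}$ has $x\in\overline{V}$ and $y\notin\overline{V}$. *)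

From Stdlib Require Import ZArith List Relations.
Open Scope Z_scope.

Definition pt := (Z * Z)%type.
Definition pset := pt -> Prop.

Definition site_adj (x y : pt) : Prop :=
  Z.abs (fst x - fst y) + Z.abs (snd x - snd y) = 1.

Definition site_joined (W : pset) (x y : pt) : Prop :=
  W x /\ W y /\
  clos_refl_trans pt (fun u v => W u /\ W v /\ site_adj u v) x y.

Definition site_connected (W : pset) : Prop :=
  forall x y, W x -> W y -> site_joined W x y.

Definition site_component (W C : pset) : Prop :=
  (exists x, C x) /\ (forall x, C x -> W x) /\ site_connected C /\
  (forall D : pset, (forall x, D x -> W x) -> site_connected D ->
     (forall x, C x -> D x) -> forall x, D x -> C x).

Definition finite_set (C : pset) : Prop :=
  exists l : list pt, forall x, C x -> In x l.

Definition closure (V : pset) : pset :=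
  fun x => V x \/
    exists C, site_component (fun y => ~ V y) C /\ finite_set C /\ C x.

(* Dual lattice: the integer pair d represents the dual vertex d + (1/2,1/2).
   Dual vertices are adjacent iff at Euclidean distance 1. *)
Definition dual_adj (d e : pt) : Prop :=
  (fst d - fst e) ^ 2 + (snd d - snd e) ^ 2 = 1.

(* the dual edge {d,e} bisects the primal edge {x,y}: both are edges and they
   have the same midpoint, i.e. x + y = (d + (1/2,1/2)) + (e + (1/2,1/2)). *)
Definition bisects (d e x y : pt) : Prop :=
  dual_adj d e /\ site_adj x y /\
  fst x + fst y = fst d + fst e + 1 /\ snd x + snd y = snd d + snd e + 1.

Definition B_edge (V : pset) (d e : pt) : Prop :=
  exists x y, bisects d e x y /\ closure V x /\ ~ closure V y.

Definition B_vertex (V : pset) (d : pt) : Prop := exists e, B_edge V d e.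

Definition degree_two (V : pset) (d : pt) : Prop :=
  exists e1 e2, e1 <> e2 /\ B_edge V d e1 /\ B_edge V d e2 /\
    forall e, B_edge V d e -> e = e1 \/ e = e2.

Definition B_conn (V : pset) : relation pt := clos_refl_trans pt (B_edge V).

Definition B_circuit (V : pset) (n : nat) (c : nat -> pt) : Prop :=
  (3 <= n)%nat /\
  (forall i j, (i < n)%nat -> (j < n)%nat -> c i = c j -> i = j) /\
  (forall i, (i < n)%nat -> B_edge V (c i) (c (Nat.modulo (S i) n))).

Definition component_is_circuit (V : pset) (d : pt) : Prop :=
  exists n c, B_circuit V n c /\
    (forall v, B_conn V d v <-> exists i, (i < n)%nat /\ v = c i) /\
    (forall u v, B_conn V d u ->
       (B_edge V u v <-> exists i, (i < n)%nat /\
          ((u = c i /\ v = c (Nat.modulo (S i) n)) \/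
           (v = c i /\ u = c (Nat.modulo (S i) n))))).

Definition component_is_biinf_path (V : pset) (d : pt) : Prop :=
  exists f : Z -> pt,
    (forall i j, f i = f j -> i = j) /\
    (forall i, B_edge V (f i) (f (i + 1))) /\
    (forall v, B_conn V d v <-> exists i, v = f i) /\
    (forall u v, B_conn V d u ->
       (B_edge V u v <-> exists i,
          (u = f i /\ v = f (i + 1)) \/ (v = f i /\ u = f (i + 1)))).

From Pilot Require Import Defs.
From Stdlib Require Import ZArith List Relations Lia Bool Wf_nat Classical ClassicalEpsilon.
Open Scope Z_scope.

(* Around a dual vertex, the four primal sites of its unit square produce an even number
   of boundary edges, so its degree in B(V) is 0, 2 or 4, and 4 means a checkerboard: two
   opposite corners in the closure, the other two outside.  The former then lie in V, and a
   path in V between them, closed by the diagonal, separates the latter, so one of them is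
   enclosed; but a site outside the closure lies in an infinite component of the complement
   of V, which cannot be enclosed.  Enclosure is detected by the parity of the crossings of a
   horizontal half-line.  Once every degree is two, following the unique continuation at each
   vertex gives a non-backtracking bi-infinite walk exhausting the component, which is either
   injective or periodic.  Finally, a circuit of B(V) encloses exactly one endpoint of each
   primal edge it crosses; as the outer endpoint cannot be enclosed, the inner one is, and
   with it all of the connected set V, which is therefore finite. *)

(** * Lattice geometry *)

Definition king (u v : pt) : Prop :=
  Z.abs (fst u - fst v) <= 1 /\ Z.abs (snd u - snd v) <= 1.

Definition same_midpoint (d e x y : pt) : bool :=
  (fst x + fst y =? fst d + fst e + 1) && (snd x + snd y =? snd d + snd e + 1).

Lemma site_adj_sym x y : site_adj x y -> site_adj y x.
Proof. unfold site_adj. lia. Qed.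

Lemma site_adj_king u v : site_adj u v -> king u v.
Proof. unfold site_adj, king. lia. Qed.

Lemma site_adj_cases u1 u2 v1 v2 : site_adj (u1, u2) (v1, v2) ->
  (v1 = u1 + 1 /\ v2 = u2) \/ (u1 = v1 + 1 /\ u2 = v2) \/
  (v1 = u1 /\ v2 = u2 + 1) \/ (u1 = v1 /\ u2 = v2 + 1).
Proof. unfold site_adj. simpl. lia. Qed.

Lemma dual_adj_iff d e : dual_adj d e <-> site_adj d e.
Proof.
  unfold dual_adj, site_adj.
  set (a := fst d - fst e). set (b := snd d - snd e).
  split; intros H; assert (-1 <= a <= 1 /\ -1 <= b <= 1) as [Ha Hb] by nia;
    assert (a = -1 \/ a = 0 \/ a = 1) as [-> | [-> | ->]] by lia;
    assert (b = -1 \/ b = 0 \/ b = 1) as [-> | [-> | ->]] by lia; simpl in *; lia.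
Qed.

Lemma bisects_iff d e x y :
  bisects d e x y <-> site_adj d e /\ site_adj x y /\ same_midpoint d e x y = true.
Proof.
  unfold bisects, same_midpoint. rewrite dual_adj_iff, andb_true_iff, !Z.eqb_eq. tauto.
Qed.

Lemma B_edge_sym V d e : B_edge V d e -> B_edge V e d.
Proof.
  intros (x & y & (Hde & Hxy & H1 & H2) & Hx & Hy). exists x, y.
  repeat split; auto; [|lia|lia]. unfold dual_adj in *. nia.
Qed.

Lemma B_edge_irrefl V d : ~ B_edge V d d.
Proof. intros (x & y & (Hdd & _) & _). unfold dual_adj in Hdd. lia. Qed.

Definition differ (V : pset) (x y : pt) : Prop :=
  (closure V x /\ ~ closure V y) \/ (closure V y /\ ~ closure V x).

Lemma B_edge_iff V d1 d2 e : B_edge V (d1, d2) e <->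
  (e = (d1 + 1, d2) /\ differ V (d1 + 1, d2) (d1 + 1, d2 + 1)) \/
  (e = (d1 - 1, d2) /\ differ V (d1, d2) (d1, d2 + 1)) \/
  (e = (d1, d2 + 1) /\ differ V (d1, d2 + 1) (d1 + 1, d2 + 1)) \/
  (e = (d1, d2 - 1) /\ differ V (d1, d2) (d1 + 1, d2)).
Proof.
  unfold B_edge, differ. split.
  - intros (x & y & Hb & Hx & Hy). rewrite bisects_iff in Hb.
    destruct e as [e1 e2], x as [x1 x2], y as [y1 y2].
    unfold site_adj, same_midpoint in Hb; simpl in Hb.
    rewrite andb_true_iff, !Z.eqb_eq in Hb. destruct Hb as (Hde & Hxy & Hs1 & Hs2).
    assert ((e1 = d1 + 1 /\ e2 = d2) \/ (e1 = d1 - 1 /\ e2 = d2) \/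
            (e1 = d1 /\ e2 = d2 + 1) \/ (e1 = d1 /\ e2 = d2 - 1))
      as [(-> & ->) | [(-> & ->) | [(-> & ->) | (-> & ->)]]] by lia;
    [ assert (x1 = d1 + 1 /\ y1 = d1 + 1 /\ ((x2 = d2 /\ y2 = d2 + 1) \/ (x2 = d2 + 1 /\ y2 = d2)))
        as (-> & -> & [(-> & ->) | (-> & ->)]) by lia
    | assert (x1 = d1 /\ y1 = d1 /\ ((x2 = d2 /\ y2 = d2 + 1) \/ (x2 = d2 + 1 /\ y2 = d2)))
        as (-> & -> & [(-> & ->) | (-> & ->)]) by lia
    | assert (x2 = d2 + 1 /\ y2 = d2 + 1 /\ ((x1 = d1 /\ y1 = d1 + 1) \/ (x1 = d1 + 1 /\ y1 = d1)))
        as (-> & -> & [(-> & ->) | (-> & ->)]) by lia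
    | assert (x2 = d2 /\ y2 = d2 /\ ((x1 = d1 /\ y1 = d1 + 1) \/ (x1 = d1 + 1 /\ y1 = d1)))
        as (-> & -> & [(-> & ->) | (-> & ->)]) by lia ];
    tauto.
  - intros [(-> & [[Hx Hy] | [Hx Hy]]) | [(-> & [[Hx Hy] | [Hx Hy]]) |
           [(-> & [[Hx Hy] | [Hx Hy]]) | (-> & [[Hx Hy] | [Hx Hy]])]]];
      do 2 eexists; (split; [|split; [exact Hx | exact Hy]]);
      rewrite bisects_iff; unfold site_adj, same_midpoint; simpl;
      rewrite andb_true_iff, !Z.eqb_eq; lia.
Qed.

Lemma bisects_primal_unique d e x y x' y' : bisects d e x y -> bisects d e x' y' ->
  (x = x' /\ y = y') \/ (x = y' /\ y = x').
Proof.
  rewrite !bisects_iff. destruct d, e, x as [x1 x2], y as [y1 y2], x' as [a1 a2], y' as [b1 b2].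
  unfold site_adj, same_midpoint; simpl. rewrite !andb_true_iff, !Z.eqb_eq. intros.
  assert ((x1 = a1 /\ x2 = a2 /\ y1 = b1 /\ y2 = b2) \/ (x1 = b1 /\ x2 = b2 /\ y1 = a1 /\ y2 = a2))
    as [(-> & -> & -> & ->) | (-> & -> & -> & ->)] by lia; auto.
Qed.

Lemma bisects_dual_unique d e d' e' x y : bisects d e x y -> bisects d' e' x y ->
  (d = d' /\ e = e') \/ (d = e' /\ e = d').
Proof.
  rewrite !bisects_iff. destruct x, y, d as [d1 d2], e as [e1 e2], d' as [a1 a2], e' as [b1 b2].
  unfold site_adj, same_midpoint; simpl. rewrite !andb_true_iff, !Z.eqb_eq. intros.
  assert ((d1 = a1 /\ d2 = a2 /\ e1 = b1 /\ e2 = b2) \/ (d1 = b1 /\ d2 = b2 /\ e1 = a1 /\ e2 = a2))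
    as [(-> & -> & -> & ->) | (-> & -> & -> & ->)] by lia; auto.
Qed.

(** * Crossing parity of closed walks *)

(* [crosses q u v]: the segment [u,v] meets the half-line {(x, snd q + eps) | x > fst q}
   for small eps > 0.  For a closed walk of king moves avoiding q, the parity of the number
   of crossing steps is that of its winding number around q. *)
Definition crosses (q u v : pt) : bool :=
  ((snd u =? snd q) && (snd v =? snd q + 1) && (fst q <? fst u)) ||
  ((snd v =? snd q) && (snd u =? snd q + 1) && (fst q <? fst v)).

Definition pt_eqb (u a : pt) : bool := (fst u =? fst a) && (snd u =? snd a).

Definition is_step (a b u v : pt) : bool :=
  (pt_eqb u a && pt_eqb v b) || (pt_eqb u b && pt_eqb v a).

Lemma is_step_true a b u v : is_step a b u v = true -> (u = a /\ v = b) \/ (u = b /\ v = a).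
Proof.
  destruct a, b, u, v. unfold is_step, pt_eqb; simpl.
  rewrite orb_true_iff, !andb_true_iff, !Z.eqb_eq.
  intros [((-> & ->) & (-> & ->)) | ((-> & ->) & (-> & ->))]; auto.
Qed.

Definition row_right_of (y x : Z) (w : pt) : bool := (snd w =? y) && (x <? fst w).

Ltac destruct_step :=
  match goal with
  | H : Z.abs (?u1 - ?v1) <= 1 /\ Z.abs (?u2 - ?v2) <= 1 |- _ =>
     let H1 := fresh in let H2 := fresh in destruct H as [H1 H2];
     assert (v1 = u1 - 1 \/ v1 = u1 \/ v1 = u1 + 1) as [ -> | [ -> | -> ] ] by lia;
     assert (v2 = u2 - 1 \/ v2 = u2 \/ v2 = u2 + 1) as [ -> | [ -> | -> ] ] by lia
  | H : Z.abs (?u1 - ?v1) + Z.abs (?u2 - ?v2) = 1 |- _ =>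
     assert ((v1 = u1 - 1 /\ v2 = u2) \/ (v1 = u1 + 1 /\ v2 = u2) \/
             (v1 = u1 /\ v2 = u2 - 1) \/ (v1 = u1 /\ v2 = u2 + 1))
       as [ [ -> -> ] | [ [ -> -> ] | [ [ -> -> ] | [ -> -> ] ] ] ] by lia
  end.

Ltac decide_Z_tests :=
  repeat match goal with
  | |- context [?a =? ?b] =>
      first [ rewrite (proj2 (Z.eqb_eq a b)) by lia
            | rewrite (proj2 (Z.eqb_neq a b)) by lia
            | destruct (Z.eqb_spec a b) ]
  | |- context [?a <? ?b] =>
      first [ rewrite (proj2 (Z.ltb_lt a b)) by lia
            | rewrite (proj2 (Z.ltb_ge a b)) by lia
            | destruct (Z.ltb_spec a b) ]
  | |- context [?a <=? ?b] =>
      first [ rewrite (proj2 (Z.leb_le a b)) by lia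
            | rewrite (proj2 (Z.leb_gt a b)) by lia
            | destruct (Z.leb_spec a b) ]
  end; simpl; try reflexivity; exfalso; lia.

Ltac pair_neq_to_coords :=
  repeat match goal with
  | H : (?a, ?b) <> (?c, ?d) |- _ =>
      assert (~ (a = c /\ b = d)) by (intros [-> ->]; apply H; reflexivity); clear H
  end.

Ltac check_step :=
  intros; pair_neq_to_coords; destruct_step; decide_Z_tests.

Lemma crosses_right_of_walk q u v : king u v -> fst q < fst u -> fst q < fst v ->
  crosses q u v = xorb (snd u <=? snd q) (snd v <=? snd q).
Proof. destruct q, u, v; unfold king, crosses; simpl; check_step. Qed.

Lemma crosses_shift_x q1 q2 u v : king u v -> u <> (q1 + 1, q2) -> v <> (q1 + 1, q2) ->
  crosses (q1, q2) u v = crosses (q1 + 1, q2) u v.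
Proof. destruct u, v; unfold king, crosses; simpl; check_step. Qed.

Lemma crosses_shift_y q1 q2 u v : king u v ->
  u <> (q1, q2) -> v <> (q1, q2) -> u <> (q1, q2 + 1) -> v <> (q1, q2 + 1) ->
  xorb (crosses (q1, q2) u v) (crosses (q1, q2 + 1) u v) =
  xorb (row_right_of (q2 + 1) q1 u) (row_right_of (q2 + 1) q1 v).
Proof. destruct u, v; unfold king, crosses, row_right_of; simpl; check_step. Qed.

Lemma crosses_diagonal a1 a2 b2 u v : king u v -> Z.abs (a2 - b2) = 1 ->
  u <> (a1, b2) -> v <> (a1, b2) -> u <> (a1 + 1, a2) -> v <> (a1 + 1, a2) ->
  xorb (crosses (a1, b2) u v) (crosses (a1 + 1, a2) u v) =
  xorb (is_step (a1, a2) (a1 + 1, b2) u v)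
    (xorb (row_right_of (Z.max a2 b2) a1 u) (row_right_of (Z.max a2 b2) a1 v)).
Proof.
  intros Huv Hb2.
  assert (b2 = a2 + 1 \/ b2 = a2 - 1) as [-> | ->] by lia;
  [rewrite Z.max_r by lia | rewrite Z.max_l by lia];
  destruct u, v; unfold king, crosses, is_step, pt_eqb, row_right_of in *; simpl in *; check_step.
Qed.

Lemma crosses_dual_x q1 q2 u v : site_adj u v ->
  xorb (crosses (q1 - 1, q2 - 1) u v) (crosses (q1, q2 - 1) u v) =
  same_midpoint u v (q1, q2) (q1 + 1, q2).
Proof. destruct u, v; unfold site_adj, crosses, same_midpoint; simpl; check_step. Qed.

Lemma crosses_dual_y q1 q2 u v : site_adj u v ->
  xorb (crosses (q1 - 1, q2 - 1) u v) (crosses (q1 - 1, q2) u v) =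
  xorb (same_midpoint u v (q1, q2) (q1, q2 + 1))
    (xorb (row_right_of q2 (q1 - 1) u) (row_right_of q2 (q1 - 1) v)).
Proof. destruct u, v; unfold site_adj, crosses, same_midpoint, row_right_of; simpl; check_step. Qed.

Fixpoint step_xor (f : pt -> pt -> bool) (w : nat -> pt) (n : nat) : bool :=
  match n with
  | O => false
  | S k => xorb (step_xor f w k) (f (w k) (w (S k)))
  end.

Section StepXor.

Variable w : nat -> pt.

Lemma step_xor_ext f h n :
  (forall k, (k < n)%nat -> f (w k) (w (S k)) = h (w k) (w (S k))) ->
  step_xor f w n = step_xor h w n.
Proof.
  induction n as [|n IH]; intros H; simpl; auto.
  rewrite IH by (intros; apply H; lia). now rewrite H by lia.
Qed.

Lemma step_xor_xorb f h n :
  step_xor (fun u v => xorb (f u v) (h u v)) w n = xorb (step_xor f w n) (step_xor h w n).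
Proof.
  induction n as [|n IH]; simpl; auto.
  rewrite IH. destruct (step_xor f w n), (step_xor h w n), (f (w n) (w (S n))), (h (w n) (w (S n))); auto.
Qed.

Lemma step_xor_telescope (g : pt -> bool) n :
  step_xor (fun u v => xorb (g u) (g v)) w n = xorb (g (w 0%nat)) (g (w n)).
Proof.
  induction n as [|n IH]; simpl.
  - now destruct (g (w 0%nat)).
  - rewrite IH. now destruct (g (w 0%nat)), (g (w n)), (g (w (S n))).
Qed.

Lemma step_xor_false f n : (forall k, (k < n)%nat -> f (w k) (w (S k)) = false) ->
  step_xor f w n = false.
Proof.
  induction n as [|n IH]; intros H; simpl; auto.
  rewrite IH by (intros; apply H; lia). now rewrite H by lia.
Qed.

Lemma step_xor_single f n j : (j < n)%nat -> f (w j) (w (S j)) = true ->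
  (forall k, (k < n)%nat -> k <> j -> f (w k) (w (S k)) = false) -> step_xor f w n = true.
Proof.
  induction n as [|n IH]; simpl; intros Hj Hf H; [lia|].
  destruct (Nat.eq_dec j n) as [->|Hne].
  - rewrite step_xor_false, Hf; auto. intros; apply H; lia.
  - rewrite IH; [now rewrite H by lia | lia | exact Hf | intros; apply H; lia].
Qed.

Lemma step_xor_true f n : step_xor f w n = true ->
  exists k, (k < n)%nat /\ f (w k) (w (S k)) = true.
Proof.
  induction n as [|n IH]; simpl; intros H; [discriminate|].
  destruct (f (w n) (w (S n))) eqn:E.
  - exists n; auto.
  - rewrite xorb_false_r in H. destruct (IH H) as (k & ? & ?). exists k; auto.
Qed.

Lemma step_xor_coboundary f1 f2 s (g : pt -> bool) n : w n = w 0%nat ->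
  (forall k, (k < n)%nat -> xorb (f1 (w k) (w (S k))) (f2 (w k) (w (S k))) =
     xorb (s (w k) (w (S k))) (xorb (g (w k)) (g (w (S k))))) ->
  xorb (step_xor f1 w n) (step_xor f2 w n) = step_xor s w n.
Proof.
  intros Hclosed H.
  rewrite <- step_xor_xorb,
    (step_xor_ext _ (fun u v => xorb (s u v) (xorb (g u) (g v))) _ H),
    step_xor_xorb, step_xor_telescope, Hclosed.
  now destruct (g (w 0%nat)), (step_xor s w n).
Qed.

End StepXor.

Definition walk (R : pt -> pt -> Prop) (w : nat -> pt) (n : nat) : Prop :=
  forall k, (k < n)%nat -> R (w k) (w (S k)).

Definition avoids (w : nat -> pt) (n : nat) (x : pt) : Prop :=
  forall k, (k <= n)%nat -> w k <> x.

Definition bounded (S : pset) : Prop :=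
  exists M, forall x, S x -> Z.abs (fst x) <= M /\ Z.abs (snd x) <= M.

Definition winding_parity (w : nat -> pt) (n : nat) (q : pt) : bool :=
  step_xor (crosses q) w n.

Lemma bounded_finite S : bounded S -> finite_set S.
Proof.
  intros [M HM].
  set (range := map (fun k => - M + Z.of_nat k) (seq 0 (Z.to_nat (2 * M + 1)))).
  assert (Hrange : forall z, Z.abs z <= M -> In z range).
  { intros z Hz. apply in_map_iff. exists (Z.to_nat (z + M)).
    split; [lia|]. apply in_seq. lia. }
  exists (list_prod range range). intros [x1 x2] Hx.
  destruct (HM _ Hx). apply in_prod; auto.
Qed.

Lemma walk_bounded (w : nat -> pt) n :
  exists M, forall k, (k <= n)%nat -> Z.abs (fst (w k)) <= M /\ Z.abs (snd (w k)) <= M.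
Proof.
  induction n as [|n [M HM]].
  - exists (Z.abs (fst (w 0%nat)) + Z.abs (snd (w 0%nat))). intros k Hk.
    replace k with 0%nat by lia. lia.
  - exists (M + Z.abs (fst (w (S n))) + Z.abs (snd (w (S n)))). intros k Hk.
    pose proof (HM 0%nat ltac:(lia)).
    destruct (Nat.eq_dec k (S n)) as [->|]; [lia|].
    specialize (HM k ltac:(lia)). lia.
Qed.

Section ClosedWalk.

Variables (w : nat -> pt) (n : nat).
Hypothesis closed : w n = w 0%nat.

Lemma winding_parity_bounded : walk king w n -> bounded (fun q => winding_parity w n q = true).
Proof.
  intros Hw. destruct (walk_bounded w n) as [M HM]. exists (M + 1). intros q Hq.
  destruct (Z_lt_le_dec (fst q) (- M)) as [Hleft | Hleft].
  - (* left of the walk, the half-line meets all row changes, which cancel out *)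
    exfalso. unfold winding_parity in Hq.
    rewrite (step_xor_ext _ _ (fun u v => xorb (snd u <=? snd q) (snd v <=? snd q))),
      step_xor_telescope, closed, xorb_nilpotent in Hq; [discriminate|].
    intros k Hk. apply crosses_right_of_walk; [apply Hw; lia| |].
    + specialize (HM k ltac:(lia)); lia.
    + specialize (HM (S k) ltac:(lia)); lia.
  - destruct (step_xor_true _ _ _ Hq) as (k & Hk & Hcross).
    pose proof (HM k ltac:(lia)). pose proof (HM (S k) ltac:(lia)).
    unfold crosses in Hcross. destruct (w k), (w (S k)), q. simpl in *.
    rewrite orb_true_iff, !andb_true_iff, !Z.eqb_eq, !Z.ltb_lt in Hcross. lia.
Qed.

Lemma winding_parity_shift_x q1 q2 : walk king w n -> avoids w n (q1 + 1, q2) ->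
  winding_parity w n (q1, q2) = winding_parity w n (q1 + 1, q2).
Proof.
  intros Hw Hq. apply step_xor_ext. intros k Hk.
  apply crosses_shift_x; [apply Hw | apply Hq | apply Hq]; lia.
Qed.

Lemma winding_parity_shift_y q1 q2 : walk king w n ->
  avoids w n (q1, q2) -> avoids w n (q1, q2 + 1) ->
  winding_parity w n (q1, q2) = winding_parity w n (q1, q2 + 1).
Proof.
  intros Hw Hq Hq'. apply xorb_eq. unfold winding_parity.
  rewrite (step_xor_coboundary _ _ _ (fun _ _ => false) (row_right_of (q2 + 1) q1) _ closed).
  - apply step_xor_false. reflexivity.
  - intros k Hk. apply crosses_shift_y; first [apply Hw | apply Hq | apply Hq']; lia.
Qed.

Lemma winding_parity_site_adj u v : walk king w n -> avoids w n u -> avoids w n v ->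
  site_adj u v -> winding_parity w n u = winding_parity w n v.
Proof.
  intros Hw Hu Hv Huv. destruct u as [u1 u2], v as [v1 v2].
  destruct (site_adj_cases _ _ _ _ Huv) as [[-> ->] | [[-> ->] | [[-> ->] | [-> ->]]]].
  - now apply winding_parity_shift_x.
  - symmetry. now apply winding_parity_shift_x.
  - now apply winding_parity_shift_y.
  - symmetry. now apply winding_parity_shift_y.
Qed.

Lemma winding_parity_diagonal a1 a2 b2 : walk king w n -> Z.abs (a2 - b2) = 1 ->
  avoids w n (a1, b2) -> avoids w n (a1 + 1, a2) ->
  xorb (winding_parity w n (a1, b2)) (winding_parity w n (a1 + 1, a2)) =
  step_xor (is_step (a1, a2) (a1 + 1, b2)) w n.
Proof.
  intros Hw Hb2 Hz Hz'.
  apply (step_xor_coboundary _ _ _ _ (row_right_of (Z.max a2 b2) a1) _ closed).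
  intros k Hk. apply crosses_diagonal; first [apply Hw | apply Hz | apply Hz' | idtac]; lia.
Qed.

(* For a walk in the dual lattice (d standing for d + (1/2,1/2)), the half-line of
   [crosses (x - (1,1))] meets the same steps as the half-line starting at the primal site x,
   which passes through no dual vertex: no avoidance condition is needed. *)
Definition dual_winding_parity (x : pt) : bool :=
  winding_parity w n (fst x - 1, snd x - 1).

Lemma dual_winding_parity_bounded : walk king w n ->
  bounded (fun x => dual_winding_parity x = true).
Proof.
  intros Hw. destruct (winding_parity_bounded Hw) as [M HM]. exists (M + 1).
  intros x Hx. specialize (HM _ Hx). simpl in HM. lia.
Qed.

Lemma dual_winding_parity_shift_x q1 q2 : walk site_adj w n ->
  xorb (dual_winding_parity (q1, q2)) (dual_winding_parity (q1 + 1, q2)) =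
  step_xor (fun u v => same_midpoint u v (q1, q2) (q1 + 1, q2)) w n.
Proof.
  intros Hw. unfold dual_winding_parity, winding_parity; simpl.
  replace (q1 + 1 - 1) with q1 by lia.
  rewrite <- step_xor_xorb. apply step_xor_ext. intros k Hk.
  apply crosses_dual_x, Hw; lia.
Qed.

Lemma dual_winding_parity_shift_y q1 q2 : walk site_adj w n ->
  xorb (dual_winding_parity (q1, q2)) (dual_winding_parity (q1, q2 + 1)) =
  step_xor (fun u v => same_midpoint u v (q1, q2) (q1, q2 + 1)) w n.
Proof.
  intros Hw. unfold dual_winding_parity, winding_parity; simpl.
  replace (q2 + 1 - 1) with q2 by lia.
  apply (step_xor_coboundary _ _ _ _ (row_right_of q2 (q1 - 1)) _ closed).
  intros k Hk. apply crosses_dual_y, Hw; lia.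
Qed.

Lemma dual_winding_parity_site_adj x y : walk site_adj w n -> site_adj x y ->
  xorb (dual_winding_parity x) (dual_winding_parity y) =
  step_xor (fun u v => same_midpoint u v x y) w n.
Proof.
  intros Hw Hxy.
  assert (Hswap : forall a b, step_xor (fun u v => same_midpoint u v a b) w n =
                              step_xor (fun u v => same_midpoint u v b a) w n).
  { intros a b. apply step_xor_ext. intros k _. unfold same_midpoint.
    now rewrite (Z.add_comm (fst a)), (Z.add_comm (snd a)). }
  destruct x as [x1 x2], y as [y1 y2].
  destruct (site_adj_cases _ _ _ _ Hxy) as [[-> ->] | [[-> ->] | [[-> ->] | [-> ->]]]].
  - now apply dual_winding_parity_shift_x.
  - rewrite xorb_comm, Hswap. now apply dual_winding_parity_shift_x.
  - now apply dual_winding_parity_shift_y.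
  - rewrite xorb_comm, Hswap. now apply dual_winding_parity_shift_y.
Qed.

End ClosedWalk.

(** * Site-components and the closure *)

Definition site_step (W : pset) : relation pt := fun u v => W u /\ W v /\ site_adj u v.

Lemma site_path_mono (W W' : pset) x y : (forall z, W z -> W' z) ->
  clos_refl_trans pt (site_step W) x y -> clos_refl_trans pt (site_step W') x y.
Proof.
  intros HWW' Hxy. induction Hxy as [u v (Hu & Hv & Huv)| |]; eauto using rt_trans, rt_refl.
  apply rt_step. repeat split; auto.
Qed.

Lemma site_path_sym (W : pset) x y :
  clos_refl_trans pt (site_step W) x y -> clos_refl_trans pt (site_step W) y x.
Proof.
  intros Hxy. induction Hxy as [u v (Hu & Hv & Huv)| |]; eauto using rt_trans, rt_refl.
  apply rt_step. repeat split; auto using site_adj_sym.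
Qed.

Lemma site_component_absorb (W C D : pset) : site_component W C ->
  (forall x, D x -> W x) -> site_connected D -> (exists u, C u /\ D u) ->
  forall x, D x -> C x.
Proof.
  intros (_ & HCW & HC & Hmax) HDW HD (u & HCu & HDu).
  set (CD := fun x => C x \/ D x).
  assert (Hto_u : forall x, CD x -> clos_refl_trans pt (site_step CD) x u).
  { intros x [Hx | Hx].
    - destruct (HC x u Hx HCu) as (_ & _ & Hp). eapply site_path_mono; [|exact Hp]. now left.
    - destruct (HD x u Hx HDu) as (_ & _ & Hp). eapply site_path_mono; [|exact Hp]. now right. }
  intros x Hx. apply (Hmax CD); [| | now left | now right].
  - intros y [Hy | Hy]; auto.
  - intros y y' Hy Hy'. split; [auto | split; [auto|]].
    eapply rt_trans; [apply Hto_u; auto | apply site_path_sym, Hto_u; auto].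
Qed.

Lemma site_component_step (W C : pset) u v : site_component W C ->
  C u -> W v -> site_adj u v -> C v.
Proof.
  intros HC Hu Hv Huv.
  assert (HuW : W u) by (apply HC; auto).
  apply (site_component_absorb W C (fun x => x = u \/ x = v)); auto.
  - intros x [-> | ->]; auto.
  - intros a b Ha Hb. split; [auto | split; [auto|]].
    destruct Ha as [-> | ->], Hb as [-> | ->]; try apply rt_refl;
      apply rt_step; repeat split; auto using site_adj_sym.
  - exists u; auto.
Qed.

Lemma site_joined_component (W : pset) z : W z -> site_component W (site_joined W z).
Proof.
  intros Hz.
  assert (Hlift : forall t, site_joined W z t ->
            clos_refl_trans pt (site_step (site_joined W z)) z t).
  { intros t (_ & _ & Hp). apply clos_rt_rtn1_iff in Hp.
    induction Hp as [|u t Hut Hp IH]; [apply rt_refl|].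
    apply (rt_trans _ _ _ u); [exact IH|]. apply rt_step.
    destruct Hut as (Hu & Ht & Hadj). apply clos_rt_rtn1_iff in Hp.
    assert (Ht' : clos_refl_trans pt (site_step W) z t)
      by (eapply rt_trans; [exact Hp | apply rt_step; repeat split; auto]).
    repeat split; auto. }
  split; [|split; [|split]].
  - exists z. repeat split; auto using rt_refl.
  - now intros x (_ & Hx & _).
  - intros x y Hx Hy. split; [auto | split; [auto|]].
    eapply rt_trans; [apply site_path_sym, Hlift | apply Hlift]; auto.
  - intros D HDW HD HKD x Hx.
    assert (Hzd : D z) by (apply HKD; repeat split; auto using rt_refl).
    destruct (HD z x Hzd Hx) as (_ & _ & Hp).
    split; [auto | split; [auto|]]. eapply site_path_mono; [exact HDW | exact Hp].
Qed.

Lemma site_connected_stable (V S : pset) x : site_connected V -> V x -> S x ->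
  (forall u v, site_adj u v -> V u -> V v -> S u -> S v) -> forall v, V v -> S v.
Proof.
  intros HV Hx HSx Hstable v Hv. destruct (HV x v Hx Hv) as (_ & _ & Hp).
  apply clos_rt_rtn1_iff in Hp. induction Hp as [|u w (Hu & Hw & Huw) _ IH]; auto.
  eapply Hstable; eauto.
Qed.

Section Closure.

Variable V : pset.

Lemma closure_boundary_in_set x y :
  closure V x -> ~ closure V y -> site_adj x y -> V x.
Proof.
  intros [Hx | (C & HC & Hfin & Hx)] Hy Hxy; auto.
  exfalso. apply Hy. destruct (classic (V y)) as [HVy | HVy]; [now left|].
  right. exists C. split; [|split]; auto. eapply site_component_step; eauto.
Qed.

Lemma not_closure_step u v :
  ~ closure V u -> ~ V v -> site_adj u v -> ~ closure V v.
Proof.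
  intros Hu Hv Huv [HVv | (C & HC & Hfin & HCv)]; [auto|].
  apply Hu. right. exists C. split; [|split]; auto.
  eapply site_component_step; eauto using site_adj_sym.
  intro HVu. apply Hu. now left.
Qed.

Lemma closure_of_bounded_stable (S : pset) z : bounded S -> S z ->
  (forall u v, site_adj u v -> ~ closure V u -> ~ closure V v -> S u -> S v) ->
  closure V z.
Proof.
  intros HS Hz Hstable. apply NNPP. intros Hnz.
  assert (HVz : ~ V z) by (intro; apply Hnz; now left).
  set (K := site_joined (fun y => ~ V y) z).
  assert (HK : forall t, K t -> ~ closure V t /\ S t).
  { intros t (_ & _ & Hp). apply clos_rt_rtn1_iff in Hp.
    induction Hp as [|u t (Hu & Ht & Hut) _ [IHc IHs]]; auto.
    assert (~ closure V t) by (eapply not_closure_step; eauto).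
    split; eauto. }
  apply Hnz. right. exists K. split; [|split].
  - now apply site_joined_component.
  - apply bounded_finite. destruct HS as [M HM]. exists M. intros t Ht. apply HM, HK, Ht.
  - repeat split; auto using rt_refl.
Qed.

End Closure.

(** * Degree two *)

Lemma rt_walk (R : relation pt) x y : clos_refl_trans pt R x y ->
  exists w m, w 0%nat = x /\ w m = y /\ walk R w m.
Proof.
  intros Hxy. apply clos_rt_rtn1_iff in Hxy.
  induction Hxy as [|y z Hyz _ (w & m & H0 & Hm & Hw)].
  - exists (fun _ => x), 0%nat. repeat split. intros k Hk. lia.
  - exists (fun k => if (k <=? m)%nat then w k else z), (S m).
    rewrite (proj2 (Nat.leb_gt (S m) m)) by lia. repeat split; auto.
    intros k Hk. rewrite (proj2 (Nat.leb_le k m)) by lia.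
    destruct (Nat.eq_dec k m) as [-> | Hne].
    + rewrite (proj2 (Nat.leb_gt (S m) m)), Hm by lia. exact Hyz.
    + rewrite (proj2 (Nat.leb_le (S k) m)) by lia. apply Hw. lia.
Qed.

Lemma rt_closed_walk (R : relation pt) x y : clos_refl_trans pt R x y ->
  exists w m, w 0%nat = x /\ w m = y /\ w (S m) = x /\ walk R w m.
Proof.
  intros Hxy. destruct (rt_walk R x y Hxy) as (w & m & H0 & Hm & Hw).
  exists (fun k => if (k <=? m)%nat then w k else x), m.
  rewrite (proj2 (Nat.leb_le 0 m)), (proj2 (Nat.leb_le m m)), (proj2 (Nat.leb_gt (S m) m))
    by lia.
  repeat split; auto. intros k Hk.
  rewrite (proj2 (Nat.leb_le k m)), (proj2 (Nat.leb_le (S k) m)) by lia. now apply Hw.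
Qed.

Lemma walk_in_avoids_outside (V : pset) w n z : (forall k, (k <= n)%nat -> V (w k)) ->
  ~ closure V z -> avoids w n z.
Proof. intros HwV Hz k Hk Hkz. apply Hz. left. rewrite <- Hkz. auto. Qed.

Lemma winding_parity_outside_closure (V : pset) w n z : w n = w 0%nat -> walk king w n ->
  (forall k, (k <= n)%nat -> V (w k)) -> ~ closure V z -> winding_parity w n z = false.
Proof.
  intros Hclosed Hw HwV Hz. apply not_true_is_false. intros Hpz. apply Hz.
  apply (closure_of_bounded_stable V (fun q => winding_parity w n q = true));
    auto using winding_parity_bounded.
  intros u v Huv Hu Hv Hpu. rewrite <- Hpu. symmetry.
  apply winding_parity_site_adj; eauto using walk_in_avoids_outside.
Qed.

Lemma site_path_diagonal_loop (V : pset) a1 a2 b2 : Z.abs (a2 - b2) = 1 -> V (a1, a2) ->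
  clos_refl_trans pt (site_step V) (a1, a2) (a1 + 1, b2) ->
  exists w n, w n = w 0%nat /\ walk king w n /\ (forall k, (k <= n)%nat -> V (w k)) /\
    step_xor (is_step (a1, a2) (a1 + 1, b2)) w n = true.
Proof.
  intros Hb2 Ha Hpath.
  destruct (rt_closed_walk _ _ _ Hpath) as (w & m & H0 & Hm & Hback & Hw).
  exists w, (S m). split; [congruence | split; [|split]].
  - intros k Hk. destruct (Nat.eq_dec k m) as [-> | Hne].
    + rewrite Hm, Hback. unfold king; simpl. lia.
    + apply site_adj_king, Hw. lia.
  - intros k Hk. destruct (Nat.eq_dec k (S m)) as [-> | Hne]; [now rewrite Hback|].
    destruct k as [|k]; [now rewrite H0|]. apply (Hw k). lia.
  - apply (step_xor_single _ _ _ m); [lia | rewrite Hm, Hback | ].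
    + unfold is_step, pt_eqb; simpl. now rewrite !Z.eqb_refl, orb_true_r.
    + intros k Hk Hne. destruct (is_step (a1, a2) (a1 + 1, b2) (w k) (w (S k))) eqn:E; auto.
      destruct (Hw k ltac:(lia)) as (_ & _ & Hadj).
      destruct (is_step_true _ _ _ _ E) as [[Hu Hv] | [Hu Hv]]; rewrite Hu, Hv in Hadj;
        unfold site_adj in Hadj; simpl in Hadj; lia.
Qed.

Section DegreeTwo.

Variable V : pset.
Hypothesis HV : site_connected V.

(* A path in V from a to b, closed by the diagonal step back to a, separates the two
   other corners of the unit square, and an enclosed site lies in the closure. *)
Lemma diagonal_corners_in_closure a1 a2 b2 : Z.abs (a2 - b2) = 1 ->
  closure V (a1, a2) -> closure V (a1 + 1, b2) ->
  closure V (a1, b2) \/ closure V (a1 + 1, a2).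
Proof.
  intros Hb2 Ha Hb. apply NNPP. intros Hz. apply not_or_and in Hz. destruct Hz as [Hz Hz'].
  assert (HVa : V (a1, a2))
    by (apply (closure_boundary_in_set V _ (a1, b2)); auto; unfold site_adj; simpl; lia).
  assert (HVb : V (a1 + 1, b2))
    by (apply (closure_boundary_in_set V _ (a1, b2)); auto; unfold site_adj; simpl; lia).
  destruct (HV _ _ HVa HVb) as (_ & _ & Hpath).
  destruct (site_path_diagonal_loop V a1 a2 b2 Hb2 HVa Hpath) as (w & n & Hclosed & Hw & HwV & Hodd).
  rewrite <- winding_parity_diagonal in Hodd; eauto using walk_in_avoids_outside.
  now rewrite !(winding_parity_outside_closure V w n) in Hodd.
Qed.

Ltac two_neighbours e1 e2 :=
  exists e1, e2; split; [intro Hee; inversion Hee; lia|];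
  split; [apply B_edge_iff; unfold differ; tauto|];
  split; [apply B_edge_iff; unfold differ; tauto|];
  let e := fresh "e" in let He := fresh "He" in let Hd := fresh "Hd" in
  intros e He; apply B_edge_iff in He;
  destruct He as [(-> & Hd) | [(-> & Hd) | [(-> & Hd) | (-> & Hd)]]];
  first [left; reflexivity | right; reflexivity | exfalso; unfold differ in Hd; tauto].

Lemma B_vertex_degree_two d : B_vertex V d -> degree_two V d.
Proof.
  destruct d as [d1 d2]. intros [e0 He0]. apply B_edge_iff in He0.
  pose proof (diagonal_corners_in_closure d1 d2 (d2 + 1) ltac:(lia)) as Hdiag.
  pose proof (diagonal_corners_in_closure d1 (d2 + 1) d2 ltac:(lia)) as Hanti.
  destruct (classic (closure V (d1, d2))), (classic (closure V (d1 + 1, d2))),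
    (classic (closure V (d1, d2 + 1))), (classic (closure V (d1 + 1, d2 + 1)));
  try (exfalso; unfold differ in He0; tauto);
  try (exfalso; destruct Hdiag; auto; fail);
  try (exfalso; destruct Hanti; auto; fail);
  first [ two_neighbours (d1 + 1, d2) (d1 - 1, d2) | two_neighbours (d1 + 1, d2) (d1, d2 + 1)
        | two_neighbours (d1 + 1, d2) (d1, d2 - 1) | two_neighbours (d1 - 1, d2) (d1, d2 + 1)
        | two_neighbours (d1 - 1, d2) (d1, d2 - 1) | two_neighbours (d1, d2 + 1) (d1, d2 - 1) ].
Qed.

End DegreeTwo.

(** * Circuits *)

Definition cyclic_walk (n : nat) (c : nat -> pt) (k : nat) : pt := c (k mod n)%nat.

Lemma cyclic_walk_small n c k : (k < n)%nat -> cyclic_walk n c k = c k.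
Proof. intros Hk. unfold cyclic_walk. now rewrite Nat.mod_small. Qed.

Section Circuit.

Variables (V : pset) (n : nat) (c : nat -> pt).
Hypothesis c_circuit : B_circuit V n c.

Let w := cyclic_walk n c.

Lemma circuit_n_pos : (0 < n)%nat.
Proof. destruct c_circuit. lia. Qed.

Lemma circuit_walk_closed : w n = w 0%nat.
Proof. unfold w, cyclic_walk. now rewrite Nat.Div0.mod_same, Nat.Div0.mod_0_l. Qed.

Lemma circuit_walk_edges : walk (B_edge V) w n.
Proof.
  intros k Hk. unfold w. rewrite !cyclic_walk_small by lia. apply c_circuit, Hk.
Qed.

Lemma circuit_walk_site_adj : walk site_adj w n.
Proof.
  intros k Hk. destruct (circuit_walk_edges k Hk) as (x & y & Hb & _).
  now apply bisects_iff in Hb.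
Qed.

Lemma circuit_parity_stable u v : site_adj u v -> (closure V u <-> closure V v) ->
  dual_winding_parity w n u = dual_winding_parity w n v.
Proof.
  intros Huv Hiff. apply xorb_eq.
  rewrite (dual_winding_parity_site_adj _ _ circuit_walk_closed _ _ circuit_walk_site_adj Huv).
  apply not_true_is_false. intros Hodd.
  destruct (step_xor_true _ _ _ Hodd) as (k & Hk & Hmid).
  destruct (circuit_walk_edges k Hk) as (x & y & Hxy & Hx & Hy).
  assert (Huv' : bisects (w k) (w (S k)) u v).
  { apply bisects_iff. split; [apply circuit_walk_site_adj, Hk | auto]. }
  destruct (bisects_primal_unique _ _ _ _ _ _ Hxy Huv') as [(-> & ->) | (-> & ->)]; tauto.
Qed.

Lemma circuit_parity_flip x y : bisects (w 0%nat) (w 1%nat) x y ->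
  xorb (dual_winding_parity w n x) (dual_winding_parity w n y) = true.
Proof.
  intros Hxy. pose proof Hxy as Hb. apply bisects_iff in Hb. destruct Hb as (_ & Hadj & Hmid).
  rewrite (dual_winding_parity_site_adj _ _ circuit_walk_closed _ _ circuit_walk_site_adj Hadj).
  apply (step_xor_single w _ n 0%nat circuit_n_pos); [exact Hmid|].
  intros k Hk Hk0. apply not_true_is_false. intros Hmid'.
  assert (Hk' : bisects (w k) (w (S k)) x y).
  { apply bisects_iff. split; [apply circuit_walk_site_adj, Hk | auto]. }
  destruct c_circuit as (Hn3 & Hinj & _). unfold w in *.
  destruct (bisects_dual_unique _ _ _ _ _ _ Hk' Hxy) as [(E & _) | (E1 & E2)].
  - rewrite !cyclic_walk_small in E by lia. apply Hinj in E; lia.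
  - rewrite !cyclic_walk_small in E1 by lia. apply Hinj in E1; [subst k | lia | lia].
    rewrite !cyclic_walk_small in E2 by lia. apply Hinj in E2; lia.
Qed.

End Circuit.

Lemma infinite_no_circuit V : site_connected V -> ~ finite_set V ->
  forall n c, ~ B_circuit V n c.
Proof.
  intros HV Hinf n c Hc.
  destruct (circuit_walk_edges V n c Hc 0%nat (circuit_n_pos V n c Hc)) as (x & y & Hxy & Hx & Hy).
  pose proof (circuit_parity_flip V n c Hc x y Hxy) as Hflip.
  set (w := cyclic_walk n c) in *.
  assert (Hbounded : bounded (fun x => dual_winding_parity w n x = true)).
  { apply dual_winding_parity_bounded; [apply circuit_walk_closed; auto|].
    intros k Hk. apply site_adj_king, (circuit_walk_site_adj V n c Hc k Hk). }
  destruct (dual_winding_parity w n y) eqn:Hpy.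
  - (* y, outside the closure, cannot be enclosed *)
    apply Hy, (closure_of_bounded_stable V (fun q => dual_winding_parity w n q = true));
      auto.
    intros u v Huv Hu Hv Hpu. rewrite <- Hpu. symmetry.
    apply (circuit_parity_stable V n c Hc); tauto.
  - (* so x is enclosed, and with it the connected set V *)
    apply Hinf, bounded_finite. destruct Hbounded as [M HM]. exists M. intros v Hv. apply HM.
    assert (HVx : V x).
    { apply (closure_boundary_in_set V x y); auto. apply bisects_iff in Hxy. tauto. }
    apply (site_connected_stable V (fun q => dual_winding_parity w n q = true) x); auto.
    + now rewrite xorb_false_r in Hflip.
    + intros u u' Hu Hvu Hvu' Hpu. rewrite <- Hpu. symmetry.
      apply (circuit_parity_stable V n c Hc); auto. split; intros; now left.
Qed.

(** * Graphs of degree two *)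

Section TwoRegularGraph.

Variables (T : Type) (E : relation T).
Hypothesis E_sym : forall x y, E x y -> E y x.
Hypothesis E_irrefl : forall x, ~ E x x.
Hypothesis E_degree_two : forall d, (exists e, E d e) ->
  exists e1 e2, e1 <> e2 /\ E d e1 /\ E d e2 /\ forall e, E d e -> e = e1 \/ e = e2.

(* [B_circuit V], [component_is_circuit V] and [component_is_biinf_path V] of Defs,
   with [B_edge V] abstracted to [E]. *)
Definition circuit (n : nat) (c : nat -> T) : Prop :=
  (3 <= n)%nat /\
  (forall i j, (i < n)%nat -> (j < n)%nat -> c i = c j -> i = j) /\
  (forall i, (i < n)%nat -> E (c i) (c (Nat.modulo (S i) n))).

Definition circuit_component (d : T) : Prop :=
  exists n c, circuit n c /\
    (forall v, clos_refl_trans T E d v <-> exists i, (i < n)%nat /\ v = c i) /\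
    (forall u v, clos_refl_trans T E d u ->
       (E u v <-> exists i, (i < n)%nat /\
          ((u = c i /\ v = c (Nat.modulo (S i) n)) \/
           (v = c i /\ u = c (Nat.modulo (S i) n))))).

Definition biinf_path_component (d : T) : Prop :=
  exists f : Z -> T,
    (forall i j, f i = f j -> i = j) /\
    (forall i, E (f i) (f (i + 1))) /\
    (forall v, clos_refl_trans T E d v <-> exists i, v = f i) /\
    (forall u v, clos_refl_trans T E d u ->
       (E u v <-> exists i,
          (u = f i /\ v = f (i + 1)) \/ (v = f i /\ u = f (i + 1)))).

Definition ray (r : nat -> T) : Prop :=
  forall k, E (r k) (r (S k)) /\ r k <> r (S (S k)) /\
    forall e, E (r (S k)) e -> e = r k \/ e = r (S (S k)).

Definition line (f : Z -> T) : Prop :=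
  forall i, E (f i) (f (i + 1)) /\ f (i - 1) <> f (i + 1) /\
    forall e, E (f i) e -> e = f (i - 1) \/ e = f (i + 1).

Definition is_other_neighbour (a p r : T) : Prop :=
  E a r /\ r <> p /\ forall e, E a e -> e = p \/ e = r.

Definition other_neighbour (a p : T) : T := epsilon (inhabits a) (is_other_neighbour a p).

Lemma other_neighbour_spec a p : E a p -> is_other_neighbour a p (other_neighbour a p).
Proof.
  intros Hap. unfold other_neighbour. apply epsilon_spec.
  destruct (E_degree_two a (ex_intro _ p Hap)) as (e1 & e2 & Hne & H1 & H2 & Hall).
  destruct (Hall p Hap) as [-> | ->].
  - exists e2. repeat split; auto.
  - exists e1. repeat split; auto. intros e He. destruct (Hall e He); auto.
Qed.

Definition ray_from (p a : T) (k : nat) : T :=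
  fst (Nat.iter k (fun s => (snd s, other_neighbour (snd s) (fst s))) (p, a)).

Lemma ray_from_ray p a : E p a -> ray (ray_from p a).
Proof.
  intros Hpa.
  set (darts := fun k => Nat.iter k (fun s => (snd s, other_neighbour (snd s) (fst s))) (p, a)).
  assert (Hdart : forall k, E (fst (darts k)) (snd (darts k))).
  { induction k as [|k IH]; auto. apply (other_neighbour_spec (snd (darts k))); auto. }
  intros k. unfold ray_from. fold (darts k) (darts (S k)) (darts (S (S k))). simpl.
  destruct (other_neighbour_spec (snd (darts k)) (fst (darts k))) as (_ & Hne & Hall); auto.
Qed.

Lemma line_of_rays (A B : nat -> T) : ray A -> ray B ->
  A 0%nat = B 2%nat -> A 1%nat = B 1%nat -> A 2%nat = B 0%nat ->
  line (fun i => if -1 <=? i then A (Z.to_nat (i + 1)) else B (Z.to_nat (1 - i))).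
Proof.
  intros HA HB H0 H1 H2. set (f := fun i => if -1 <=? i then _ else _).
  assert (fA : forall i, -1 <= i -> f i = A (Z.to_nat (i + 1))).
  { intros i Hi. unfold f. now rewrite (proj2 (Z.leb_le _ _) Hi). }
  assert (fB : forall i, i <= 1 -> f i = B (Z.to_nat (1 - i))).
  { intros i Hi. unfold f. destruct (Z.leb_spec (-1) i); auto.
    assert (i = -1 \/ i = 0 \/ i = 1) as [-> | [-> | ->]] by lia; simpl; auto. }
  intros i. destruct (Z_le_gt_dec 0 i) as [Hi | Hi].
  - rewrite !fA by lia. destruct (HA (Z.to_nat i)) as (_ & Hne & Hall).
    destruct (HA (S (Z.to_nat i))) as (Hedge & _ & _).
    replace (Z.to_nat (i - 1 + 1)) with (Z.to_nat i) by lia.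
    replace (Z.to_nat (i + 1)) with (S (Z.to_nat i)) by lia.
    replace (Z.to_nat (i + 1 + 1)) with (S (S (Z.to_nat i))) by lia.
    auto.
  - rewrite !fB by lia. destruct (HB (Z.to_nat (- i))) as (Hedge & Hne & Hall).
    replace (Z.to_nat (1 - (i - 1))) with (S (S (Z.to_nat (- i)))) by lia.
    replace (Z.to_nat (1 - i)) with (S (Z.to_nat (- i))) by lia.
    replace (Z.to_nat (1 - (i + 1))) with (Z.to_nat (- i)) by lia.
    repeat split; auto. intros e He. destruct (Hall e He); auto.
Qed.

Lemma line_through d : (exists e, E d e) -> exists f, line f /\ f 0 = d.
Proof.
  intros [e0 He0].
  set (A := ray_from e0 d). assert (HA : ray A) by (apply ray_from_ray; auto).
  set (B := ray_from (A 2%nat) d).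
  assert (HB : ray B) by (apply ray_from_ray, E_sym, (HA 1%nat)).
  assert (HB2 : B 2%nat = A 0%nat).
  { destruct (HB 0%nat) as (_ & Hne & _). destruct (HB 1%nat) as (Hedge & _ & _).
    destruct (HA 0%nat) as (_ & _ & Hall).
    destruct (Hall (B 2%nat) Hedge) as [E2 | E2]; [exact E2|].
    exfalso. apply Hne. symmetry. exact E2. }
  eexists. split; [apply (line_of_rays A B HA HB); auto|]. reflexivity.
Qed.

Section Line.

Variable f : Z -> T.
Hypothesis f_line : line f.

Lemma line_edge_prev i : E (f i) (f (i - 1)).
Proof.
  apply E_sym. pose proof (proj1 (f_line (i - 1))) as H.
  now replace (i - 1 + 1) with i in H by lia.
Qed.

Lemma line_reach i : clos_refl_trans T E (f 0) (f i).
Proof.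
  assert (H : forall k : nat, clos_refl_trans T E (f 0) (f (Z.of_nat k)) /\
                              clos_refl_trans T E (f 0) (f (- Z.of_nat k))).
  { induction k as [|k [IHp IHn]]; [split; apply rt_refl|]. split.
    - eapply rt_trans; [exact IHp|]. apply rt_step.
      replace (Z.of_nat (S k)) with (Z.of_nat k + 1) by lia. apply f_line.
    - eapply rt_trans; [exact IHn|]. apply rt_step.
      replace (- Z.of_nat (S k)) with (- Z.of_nat k - 1) by lia. apply line_edge_prev. }
  destruct (Z_le_gt_dec 0 i).
  - replace i with (Z.of_nat (Z.to_nat i)) by lia. apply H.
  - replace i with (- Z.of_nat (Z.to_nat (- i))) by lia. apply H.
Qed.

Lemma line_component v : clos_refl_trans T E (f 0) v -> exists i, v = f i.
Proof.
  intros Hv. apply clos_rt_rtn1_iff in Hv. induction Hv as [|u v Huv _ [i ->]]; [now exists 0|].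
  destruct (proj2 (proj2 (f_line i)) v Huv) as [-> | ->]; eauto.
Qed.

Lemma line_next i j : f i = f j -> f (i - 1) = f (j - 1) -> f (i + 1) = f (j + 1).
Proof.
  intros Hij Hprev. destruct (f_line i) as (Hedge & Hne & _). rewrite Hij in Hedge.
  destruct (proj2 (proj2 (f_line j)) _ Hedge) as [Hback | ->]; auto.
  exfalso. apply Hne. congruence.
Qed.

Lemma line_prev i j : f i = f j -> f (i + 1) = f (j + 1) -> f (i - 1) = f (j - 1).
Proof.
  intros Hij Hnext. pose proof (line_edge_prev i) as Hedge. destruct (f_line i) as (_ & Hne & _).
  rewrite Hij in Hedge. destruct (proj2 (proj2 (f_line j)) _ Hedge) as [-> | Hfwd]; auto.
  exfalso. apply Hne. congruence.
Qed.

Lemma line_next_mirror i j : f i = f j -> f (i - 1) = f (j + 1) -> f (i + 1) = f (j - 1).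
Proof.
  intros Hij Hprev. destruct (f_line i) as (Hedge & Hne & _). rewrite Hij in Hedge.
  destruct (proj2 (proj2 (f_line j)) _ Hedge) as [-> | Hfwd]; auto.
  exfalso. apply Hne. congruence.
Qed.

Lemma line_shift a b : f a = f b -> f (a + 1) = f (b + 1) -> forall k, f (a + k) = f (b + k).
Proof.
  intros H0 H1.
  assert (Hpair : forall k, f (a + k) = f (b + k) /\ f (a + k + 1) = f (b + k + 1)).
  { apply Z.peano_ind.
    - now rewrite !Z.add_0_r.
    - intros k [Hk Hk1]. unfold Z.succ. rewrite !Z.add_assoc. split; auto.
      apply line_next; auto. now replace (a + k + 1 - 1) with (a + k) by lia;
      replace (b + k + 1 - 1) with (b + k) by lia.
    - intros k [Hk Hk1]. unfold Z.pred. split.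
      + replace (a + (k + -1)) with (a + k - 1) by lia.
        replace (b + (k + -1)) with (b + k - 1) by lia. now apply line_prev.
      + now replace (a + (k + -1) + 1) with (a + k) by lia;
        replace (b + (k + -1) + 1) with (b + k) by lia. }
  intros k. apply Hpair.
Qed.

Lemma line_no_reflection a b : a < b -> f a = f b -> f (a + 1) = f (b - 1) -> False.
Proof.
  intros Hab H0 H1.
  assert (Hpair : forall k : nat, f (a + Z.of_nat k) = f (b - Z.of_nat k) /\
                                  f (a + Z.of_nat k + 1) = f (b - Z.of_nat k - 1)).
  { induction k as [|k [Hk Hk1]].
    - simpl. now rewrite Z.add_0_r, Z.sub_0_r.
    - replace (Z.of_nat (S k)) with (Z.of_nat k + 1) by lia. rewrite !Z.add_assoc.
      replace (b - (Z.of_nat k + 1)) with (b - Z.of_nat k - 1) by lia. split; auto.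
      apply line_next_mirror; auto.
      now replace (a + Z.of_nat k + 1 - 1) with (a + Z.of_nat k) by lia;
        replace (b - Z.of_nat k - 1 + 1) with (b - Z.of_nat k) by lia. }
  (* the two ends meet in the middle, forcing a backtrack or a loop *)
  destruct (Z.Even_or_Odd (b - a)) as [[h Hh] | [h Hh]].
  - destruct (Hpair (Z.to_nat (h - 1))) as [Hk _]. rewrite Z2Nat.id in Hk by lia.
    destruct (f_line (a + h)) as (_ & Hne & _). apply Hne.
    replace (a + h - 1) with (a + (h - 1)) by lia. rewrite Hk. f_equal. lia.
  - destruct (Hpair (Z.to_nat h)) as [Hk _]. rewrite Z2Nat.id in Hk by lia.
    apply (E_irrefl (f (a + h))). rewrite Hk at 2.
    replace (b - h) with (a + h + 1) by lia. apply f_line.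
Qed.

Lemma line_periodic a b : a < b -> f a = f b -> forall x, f (x + (b - a)) = f x.
Proof.
  intros Hab H0. destruct (f_line a) as (Hedge & _ & _). rewrite H0 in Hedge.
  destruct (proj2 (proj2 (f_line b)) _ Hedge) as [Hrefl | Hnext].
  - exfalso. now apply (line_no_reflection a b).
  - intros x. pose proof (line_shift a b H0 Hnext (x - a)) as Hx.
    replace (a + (x - a)) with x in Hx by lia. rewrite Hx. f_equal. lia.
Qed.

Lemma line_mod_period (N : Z) : 0 < N -> (forall x, f (x + N) = f x) ->
  forall x, f x = f (x mod N).
Proof.
  intros HN Hper.
  assert (Hmul : forall y (k : nat), f (y + N * Z.of_nat k) = f y).
  { intros y k. induction k as [|k IH]; [now rewrite Z.mul_0_r, Z.add_0_r|].
    rewrite <- IH, <- (Hper (y + N * Z.of_nat k)). f_equal. lia. }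
  intros x. rewrite (Z.div_mod x N) at 1 by lia.
  destruct (Z_le_gt_dec 0 (x / N)).
  - rewrite Z.add_comm. replace (x / N) with (Z.of_nat (Z.to_nat (x / N))) by lia. apply Hmul.
  - rewrite <- (Hmul _ (Z.to_nat (- (x / N)))). f_equal. lia.
Qed.

Section Period.

Variable N : nat.
Hypothesis N_pos : (0 < N)%nat.
Hypothesis N_period : f (Z.of_nat N) = f 0.
Hypothesis N_least : forall k, (0 < k < N)%nat -> f (Z.of_nat k) <> f 0.

Let c (k : nat) : T := f (Z.of_nat k).

Lemma period_mod x : f x = c (Z.to_nat (x mod Z.of_nat N)).
Proof.
  unfold c. rewrite Z2Nat.id by (apply Z.mod_pos_bound; lia).
  apply line_mod_period; [lia|]. intros y.
  rewrite <- (line_periodic 0 (Z.of_nat N) ltac:(lia) (eq_sym N_period) y). f_equal. lia.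
Qed.

Lemma period_mod_succ x : f (x + 1) = c (Nat.modulo (S (Z.to_nat (x mod Z.of_nat N))) N).
Proof.
  rewrite period_mod. unfold c. f_equal.
  pose proof (Z.mod_pos_bound x (Z.of_nat N) ltac:(lia)).
  pose proof (Z.mod_pos_bound (x + 1) (Z.of_nat N) ltac:(lia)).
  rewrite Nat2Z.inj_mod, Nat2Z.inj_succ, !Z2Nat.id by lia.
  unfold Z.succ. now rewrite Z.add_mod_idemp_l by lia.
Qed.

Lemma period_mod_nat k : c (Nat.modulo k N) = c k.
Proof.
  symmetry. unfold c at 1. rewrite period_mod. f_equal.
  rewrite <- Nat2Z.inj_mod. apply Nat2Z.id.
Qed.

Lemma period_injective a b : (a < N)%nat -> (b < N)%nat -> c a = c b -> a = b.
Proof.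
  assert (Hlt : forall i j, (i < j < N)%nat -> c i <> c j).
  { intros i j Hij Ec. unfold c in Ec.
    pose proof (line_periodic (Z.of_nat i) (Z.of_nat j) ltac:(lia) Ec 0) as Hp.
    apply (N_least (j - i)); [lia|]. rewrite <- Hp. f_equal. lia. }
  intros Ha Hb Ec. destruct (Nat.lt_total a b) as [H | [H | H]]; auto.
  - now destruct (Hlt a b).
  - now destruct (Hlt b a).
Qed.

Lemma period_ge_3 : (3 <= N)%nat.
Proof.
  destruct (f_line 1) as (_ & Hne & _).
  assert (N <> 1%nat).
  { intros ->. apply (E_irrefl (f 0)). rewrite <- N_period at 2. apply f_line. }
  assert (N <> 2%nat) by (intros ->; apply Hne; exact (eq_sym N_period)).
  lia.
Qed.

Lemma line_component_circuit : circuit_component (f 0).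
Proof.
  assert (Hedge : forall i, E (c i) (c (Nat.modulo (S i) N))).
  { intros i. rewrite period_mod_nat. unfold c. rewrite Nat2Z.inj_succ. apply f_line. }
  exists N, c. split; [split; [apply period_ge_3 | split; [apply period_injective | auto]]|].
  split.
  - intros v. split.
    + intros Hv. destruct (line_component v Hv) as [x ->]. rewrite period_mod.
      eexists. split; [|reflexivity]. pose proof (Z.mod_pos_bound x (Z.of_nat N)). lia.
    + intros (i & _ & ->). apply line_reach.
  - intros u v Hu. destruct (line_component u Hu) as [x ->].
    pose proof (Z.mod_pos_bound x (Z.of_nat N)). pose proof (Z.mod_pos_bound (x - 1) (Z.of_nat N)).
    split.
    + intros Hv. destruct (proj2 (proj2 (f_line x)) v Hv) as [-> | ->].
      * exists (Z.to_nat ((x - 1) mod Z.of_nat N)). split; [lia|]. right. split.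
        -- apply period_mod.
        -- rewrite <- period_mod_succ. f_equal. lia.
      * exists (Z.to_nat (x mod Z.of_nat N)). split; [lia|]. left.
        split; [apply period_mod | apply period_mod_succ].
    + intros (i & _ & [[-> ->] | [-> ->]]); [|apply E_sym]; apply Hedge.
Qed.

End Period.

Lemma line_least_period : ~ (forall i j, f i = f j -> i = j) ->
  exists N, (0 < N)%nat /\ f (Z.of_nat N) = f 0 /\
    forall k, (0 < k < N)%nat -> f (Z.of_nat k) <> f 0.
Proof.
  intros Hrep.
  assert (Hloop : exists a b, a < b /\ f a = f b).
  { apply NNPP. intros Hno. apply Hrep. intros i j Hij.
    destruct (Z.lt_total i j) as [H | [H | H]]; auto; exfalso; apply Hno; eauto. }
  destruct Hloop as (a & b & Hab & Hfab).
  destruct (dec_inh_nat_subset_has_unique_least_element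
              (fun N => (0 < N)%nat /\ f (Z.of_nat N) = f 0))
    as (N & ((HN & HNf) & Hleast) & _).
  - intros N. apply classic.
  - exists (Z.to_nat (b - a)). split; [lia|].
    rewrite <- (line_periodic a b Hab Hfab 0). f_equal. lia.
  - exists N. repeat split; auto. intros k Hk Hkf.
    specialize (Hleast k (conj (proj1 Hk) Hkf)). lia.
Qed.

Lemma line_component_biinf_path : (forall i j, f i = f j -> i = j) -> biinf_path_component (f 0).
Proof.
  intros Hinj. exists f. split; [exact Hinj | split; [apply f_line | split]].
  - intros v. split; [apply line_component | intros [i ->]; apply line_reach].
  - intros u v Hu. destruct (line_component u Hu) as [i ->]. split.
    + intros Hv. destruct (proj2 (proj2 (f_line i)) v Hv) as [-> | ->].
      * exists (i - 1). right. split; auto. f_equal. lia.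
      * exists i. now left.
    + intros [j [[Ei ->] | [-> Ei]]]; rewrite Ei; [|apply E_sym]; apply f_line.
Qed.

End Line.

Theorem two_regular_component d : (exists e, E d e) ->
  circuit_component d \/ biinf_path_component d.
Proof.
  intros Hd. destruct (line_through d Hd) as (f & Hf & <-).
  destruct (classic (forall i j, f i = f j -> i = j)) as [Hinj | Hrep].
  - right. now apply line_component_biinf_path.
  - left. destruct (line_least_period f Hf Hrep) as (N & HN & Hperiod & Hleast).
    exact (line_component_circuit f Hf N HN Hperiod Hleast).
Qed.

End TwoRegularGraph.

Theorem lemma3 (V : pset) (HV : site_connected V) :
  (forall d, B_vertex V d -> degree_two V d) /\
  (forall d, B_vertex V d ->
     component_is_circuit V d \/ component_is_biinf_path V d) /\
  (~ finite_set V -> forall n c, ~ B_circuit V n c).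
Proof.
  split; [|split].
  - exact (B_vertex_degree_two V HV).
  - exact (two_regular_component pt (B_edge V) (B_edge_sym V) (B_edge_irrefl V)
             (B_vertex_degree_two V HV)).
  - exact (infinite_no_circuit V HV).
Qed.
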